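(* Let $q$ be a prime power and let $f:\mathbb{F}_q^n \rightarrow \mathbb{F}_q$ be an unknown multilinear polynomial of degree $d$ over $\mathbb{F}_q$. Then there is an exact quantum query algorithm which learns $f$ with certainty using $1 + \sum_{i=1}^d 2^{i-1} \binom{n}{i-1}$ queries to $f$; in particular this is $O(n^{d-1})$ for constant $d$.
   Context: $\mathbb{F}_q$ denotes the finite field with $q$ elements. A function $f:\mathbb{F}_q^n \rightarrow \mathbb{F}_q$ is a multilinear polynomial of degree $d$ if it can be written as $f(x) = \sum_{S \subseteq [n],|S|\le d} \alpha_S \prod_{i \in S} x_i$ for some coefficients $\alpha_S \in \mathbb{F}_q$, where $[n]=\{1,\dots,n\}$ and the empty product equals $1$. In the quantum query model, the algorithm accesses $f$ only via the unitary oracle $O_f \ket{x}\ket{y} = \ket{x}\ket{y + f(x)}$ for $x \in \mathbb{F}_q^n$, $y \in \mathbb{F}_q$ (interleaved with arbitrary oracle-independent unitaries and measurements); the number of queries is the number of applications of $O_f$. To learn $f$ means to output all coefficients $\alpha_S$; an exact algorithm does so with probability $1$ for every such $f$. *)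

From HB Require Import structures.
From mathcomp Require Import all_boot all_order all_algebra all_field.
Set Implicit Arguments. Unset Strict Implicit. Unset Printing Implicit Defensive.
Import GRing.Theory Num.Theory.
Local Open Scope ring_scope.

Section QueryLearning.
Variables (F : finFieldType) (n : nat).

(* Coefficient vector (alpha_S)_{S subset [n]} of a multilinear polynomial. *)
Definition coeffs := {ffun {set 'I_n} -> F}.

Definition deg_le (d : nat) (alpha : coeffs) : Prop :=
  forall S : {set 'I_n}, (d < #|S|)%N -> alpha S = 0.

Definition mleval (alpha : coeffs) (x : {ffun 'I_n -> F}) : F :=
  \sum_(S : {set 'I_n}) alpha S * \prod_(i in S) x i.

(* Computational basis of the state space: |x>|y>|w>, with x in F^n, y in F
   (query registers) and w in an arbitrary finite workspace W. *)
Definition qidx (W : finType) := ({ffun 'I_n -> F} * F * W)%type.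
Definition qdim (W : finType) := #|{: qidx W}|.
Definition qvec (W : finType) := 'cV[algC]_(qdim W).
Definition qop (W : finType) := 'M[algC]_(qdim W).

Definition unitary (W : finType) (U : qop W) : Prop :=
  U *m (map_mx Num.conj U)^T = 1%:M.

Definition oracle (W : finType) (g : {ffun 'I_n -> F} -> F) : qop W :=
  \matrix_(i, j) (let: (x, y, w) := (enum_val j : qidx W) in
                  if enum_val i == (x, y + g x, w) then 1 else 0).

Definition basis_vec (W : finType) (s : qidx W) : qvec W :=
  \col_i (if enum_val i == s then 1 else 0).

Fixpoint run (W : finType) (U : nat -> qop W) (O : qop W) (s0 : qvec W)
    (k : nat) : qvec W :=
  match k with
  | 0 => U 0%N *m s0
  | k'.+1 => U k'.+1 *m (O *m run U O s0 k')
  end.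

Definition succ_prob (W : finType) (out : qidx W -> coeffs) (st : qvec W)
    (alpha : coeffs) : algC :=
  \sum_(i | out (enum_val i) == alpha) `|st i 0| ^+ 2.

Definition exact_learner (d T : nat) (W : finType) (s0 : qidx W)
    (U : nat -> qop W) (out : qidx W -> coeffs) : Prop :=
  (forall k, (k <= T)%N -> unitary (U k)) /\
  forall alpha : coeffs, deg_le d alpha ->
    succ_prob out (run U (oracle W (mleval alpha)) (basis_vec s0) T) alpha = 1.

End QueryLearning.

Definition query_bound (n d : nat) : nat :=
  (1 + \sum_(1 <= i < d.+1) 2 ^ (i - 1) * 'C(n, i - 1))%N.

From HB Require Import structures.
From mathcomp Require Import all_boot all_order all_algebra all_field.
From mathcomp Require Import all_fingroup all_character.
From mathcomp Require Import ring.
Set Implicit Arguments. Unset Strict Implicit. Unset Printing Implicit Defensive.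
Import GRing.Theory Num.Theory.
Local Open Scope ring_scope.

(* Fix a nonprincipal additive character chi of F. The coefficients are learned set by set,
   for |T| < d in order of decreasing size. For a fixed T, the 2^|T| queries
   f(x + 1_u), u in T, with signs (-1)^|T \ u| and phase kickback on a uniform superposition,
   imprint the phase chi (D_T f (x)), where D_T f = sum_(S >= T) alpha_S x^(S \ T) is the
   T-th finite difference of f. The coefficients alpha_S with |S| >= |T| + 2 were learned in
   earlier rounds and sit in a classical register, so a controlled phase cancels those terms
   and leaves the affine function alpha_T + sum_(j notin T) alpha_(T + j) x_j. The inverse
   Fourier transform over F^n x F maps this phase exactly to the basis state of its
   coefficient vector, which is stored. A final query at x = 0 yields alpha_0, for a total of
   1 + sum_(|T| < d) 2^|T| = 1 + sum_(i < d) 2^i C(n, i) queries. *)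

(** * Operators given by kernels on the computational basis *)

Section KernelMatrices.
Variables (F : finFieldType) (n : nat) (W : finType).
Local Notation idx := (qidx F n W).
Local Notation mat := (qop F n W).

Definition kvec (phi : idx -> algC) : qvec F n W := \col_i phi (enum_val i).

Definition kmx (K : idx -> idx -> algC) : mat :=
  \matrix_(i, j) K (enum_val i) (enum_val j).

Lemma eq_kvec (phi psi : idx -> algC) : phi =1 psi -> kvec phi = kvec psi.
Proof. by move=> eq_phi; apply/matrixP => i k; rewrite !mxE eq_phi. Qed.

Lemma sum_enum_val (G : idx -> algC) :
  \sum_(j < qdim F n W) G (enum_val j) = \sum_t G t.
Proof. by rewrite (big_enum_val G). Qed.

Lemma kmx_mul_kvec K phi :
  kmx K *m kvec phi = kvec (fun s => \sum_t K s t * phi t).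
Proof.
apply/matrixP => i k; rewrite !mxE -sum_enum_val.
by apply: eq_bigr => j _; rewrite !mxE.
Qed.

Lemma kmx_unitary K :
  (forall s u, \sum_t K s t * (K u t)^* = (s == u)%:R) -> unitary (kmx K).
Proof.
move=> orthoK; apply/matrixP => i k; rewrite !mxE -(inj_eq enum_val_inj).
by rewrite -orthoK -sum_enum_val; apply: eq_bigr => j _; rewrite !mxE.
Qed.

Lemma unitary_mul (A B : mat) : unitary A -> unitary B -> unitary (A *m B).
Proof.
rewrite /unitary => uA uB.
by rewrite map_mxM trmx_mul mulmxA -(mulmxA A) uB mulmx1 uA.
Qed.

Lemma unitary1 : unitary (1%:M : mat).
Proof. by rewrite /unitary map_mx1 trmx1 mulmx1. Qed.

Definition delta_state (s : idx) (c : algC) (t : idx) : algC := c * (t == s)%:R.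

Lemma sum_mul_delta_state (G : idx -> algC) s c :
  \sum_t G t * delta_state s c t = G s * c.
Proof.
rewrite (bigD1 s) //= /delta_state eqxx mulr1 big1 ?addr0 // => t /negPf ->.
by rewrite !mulr0.
Qed.

Lemma basis_vecE s : basis_vec s = kvec (delta_state s 1).
Proof. by apply/matrixP => i j; rewrite !mxE /delta_state mul1r; case: eqP. Qed.

Definition perm_gate (sg : idx -> idx) : mat := kmx (fun s t => (s == sg t)%:R).

Section PermGate.
Variables (sg sg' : idx -> idx).
Hypotheses (sgK : cancel sg sg') (sg'K : cancel sg' sg).

Lemma sum_perm_gate (G : idx -> algC) s :
  \sum_t (s == sg t)%:R * G t = G (sg' s).
Proof.
rewrite (bigD1 (sg' s)) //= sg'K eqxx mul1r big1 ?addr0 // => t /negPf ne.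
suff /negPf -> : s != sg t by rewrite mul0r.
by apply: contraFN ne => /eqP ->; rewrite sgK.
Qed.

Lemma perm_gate_kvec phi : perm_gate sg *m kvec phi = kvec (phi \o sg').
Proof. by rewrite kmx_mul_kvec; apply: eq_kvec => s; rewrite sum_perm_gate. Qed.

Lemma perm_gate_delta s c :
  perm_gate sg *m kvec (delta_state s c) = kvec (delta_state (sg s) c).
Proof.
rewrite perm_gate_kvec; apply: eq_kvec => t /=; rewrite /delta_state.
by have -> : (sg' t == s) = (t == sg s) by apply/eqP/eqP => [<-|->]; rewrite ?sgK ?sg'K.
Qed.

Lemma perm_gate_unitary : unitary (perm_gate sg).
Proof.
apply: kmx_unitary => s u; rewrite sum_perm_gate sg'K eq_sym.
by case: (s == u); rewrite ?conjC1 ?conjC0.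
Qed.

End PermGate.
End KernelMatrices.

(** * Query circuits *)

Section Circuits.
Variables (F : finFieldType) (n : nat) (W : finType).
Local Notation mat := (qop F n W).
Local Notation vct := (qvec F n W).

Inductive instr := Gate of mat | Query.

Definition step (O : mat) (v : vct) (i : instr) : vct :=
  if i is Gate M then M *m v else O *m v.

Definition exec (O : mat) (l : seq instr) (v : vct) : vct := foldl (step O) v l.

Lemma exec_cat O l1 l2 v : exec O (l1 ++ l2) v = exec O l2 (exec O l1 v).
Proof. exact: foldl_cat. Qed.

Definition is_query (i : instr) : bool := if i is Query then true else false.

Definition nqueries (l : seq instr) : nat := count is_query l.

(* (U_0, [:: U_1; ...; U_k]): the unitary before the first query, then the one after each query. *)
Fixpoint compile (l : seq instr) : mat * seq mat :=
  match l with
  | [::] => (1%:M, [::])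
  | Gate M :: l' => let: (U0, Us) := compile l' in (U0 *m M, Us)
  | Query :: l' => let: (U0, Us) := compile l' in (1%:M, U0 :: Us)
  end.

Definition circuit_unitaries (l : seq instr) (k : nat) : mat :=
  nth 1%:M ((compile l).1 :: (compile l).2) k.

Definition after_queries (O : mat) (v : vct) (Us : seq mat) : vct :=
  foldl (fun a U => U *m (O *m a)) v Us.

Lemma after_queries_compile O l v :
  after_queries O ((compile l).1 *m v) (compile l).2 = exec O l v.
Proof.
elim: l v => [|[M|] l IHl] v /=; first by rewrite mul1mx.
  by move: (IHl (M *m v)); case: (compile l) => U0 Us /=; rewrite mulmxA.
by move: (IHl (O *m v)); case: (compile l) => U0 Us /= <-; rewrite mul1mx.
Qed.

Lemma size_compile l : size (compile l).2 = nqueries l.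
Proof. by elim: l => [|[M|] l IHl] //=; case: (compile l) IHl => U0 Us /= ->. Qed.

Lemma run_circuit O l s0 :
  run (circuit_unitaries l) O s0 (nqueries l) = exec O l s0.
Proof.
rewrite -after_queries_compile -size_compile /circuit_unitaries.
case: (compile l) => U0 Us /=.
suff run_take k : (k <= size Us)%N ->
    run (fun i => nth 1%:M (U0 :: Us) i) O s0 k = after_queries O (U0 *m s0) (take k Us).
  by rewrite run_take // take_size.
elim: k => [|k IHk] lt_k /=; first by rewrite take0.
by rewrite IHk ?(ltnW lt_k) // (take_nth 1%:M lt_k) -cats1 /after_queries foldl_cat.
Qed.

Fixpoint gates_unitary (l : seq instr) : Prop :=
  if l is i :: l' then (if i is Gate M then unitary M else True) /\ gates_unitary l'
  else True.

Lemma gates_unitary_cat l1 l2 :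
  gates_unitary l1 -> gates_unitary l2 -> gates_unitary (l1 ++ l2).
Proof. by elim: l1 => //= i l IHl [ui ul] ul2; split => //; apply: IHl. Qed.

Lemma gates_unitary_flatten (T : Type) (f : T -> seq instr) (s : seq T) :
  (forall x, gates_unitary (f x)) -> gates_unitary (flatten [seq f x | x <- s]).
Proof. by move=> uf; elim: s => //= x s IHs; apply: gates_unitary_cat. Qed.

Lemma circuit_unitaries_unitary l : gates_unitary l ->
  forall k, unitary (circuit_unitaries l k).
Proof.
rewrite /circuit_unitaries; elim: l => [|[M|] l IHl] /=.
- by move=> _ [|[|k]] /=; rewrite ?nth_nil; apply: unitary1.
- move=> [uM /IHl]; case: (compile l) => U0 Us /= uUs [|k] /=; last exact: (uUs k.+1).
  exact: unitary_mul (uUs 0%N) uM.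
- move=> [_ /IHl]; case: (compile l) => U0 Us /= uUs [|k] /=; first exact: unitary1.
  exact: (uUs k).
Qed.

End Circuits.

(** * An additive character of F *)

Section AdditiveCharacter.
Variable F : finFieldType.

Let gT : finGroupType := FinRing.Field_to_finGroup F.
Let G := [set: gT]%G.

Lemma Nirr_additive_gt1 : (1 < Nirr G)%N.
Proof.
rewrite NirrE; have /eqP -> : #|classes G| == #|G|.
  by rewrite -card_classes_abelian; apply: FinRing.zmod_abelian.
by rewrite cardsT (cardD1 (0 : F)) (cardD1 (1 : F)) !inE oner_neq0.
Qed.

(* Index 1 is a nonprincipal irreducible character of the additive group of F (index 0 is
   the principal one); as the group is abelian, it is a homomorphism into algC. *)
Definition chi (a : F) : algC := 'chi_(Ordinal Nirr_additive_gt1) (a : gT).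

Lemma chi_linear_char : 'chi_(Ordinal Nirr_additive_gt1) \is a linear_char.
Proof. by move/char_abelianP: (FinRing.zmod_abelian (G : {set gT})). Qed.

Lemma chiD a b : chi (a + b) = chi a * chi b.
Proof. exact: (lin_charM chi_linear_char) (in_setT (a : gT)) (in_setT (b : gT)). Qed.

Lemma chi0 : chi 0 = 1.
Proof. exact: (lin_char1 chi_linear_char). Qed.

Lemma conj_chi a : (chi a)^* = chi (- a).
Proof. by rewrite -(lin_charV_conj chi_linear_char) ?in_setT. Qed.

Lemma chi_mulN a : chi a * chi (- a) = 1.
Proof. by rewrite -chiD subrr chi0. Qed.

Lemma norm_chi a : `|chi a| = 1.
Proof. exact: (normC_lin_char chi_linear_char) (in_setT (a : gT)). Qed.

Lemma chi_sum (I : finType) (f : I -> F) : chi (\sum_i f i) = \prod_i chi (f i).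
Proof. exact: (big_morph chi chiD chi0). Qed.

Lemma chi_nontrivial : exists a, chi a != 1.
Proof.
apply/existsP; rewrite -negb_forall; apply/negP => /forallP chi1.
suff : 'chi_(Ordinal Nirr_additive_gt1) = 'chi_0 by move/irr_inj.
by apply/cfunP => x; rewrite irr0 cfun1E in_setT; apply/eqP/chi1.
Qed.

Lemma sum_chi : \sum_a chi a = 0.
Proof.
have [a chi_a_neq1] := chi_nontrivial.
have : \sum_b chi b = chi a * \sum_b chi b.
  by rewrite mulr_sumr (reindex_inj (addrI a)); apply: eq_bigr => b _; rewrite chiD.
move/eqP; rewrite -subr_eq0 -{1}(mul1r (\sum_b _)) -mulrBl mulf_eq0 subr_eq0.
by rewrite eq_sym (negbTE chi_a_neq1) => /eqP.
Qed.

Lemma sum_chi_mul b : \sum_a chi (b * a) = if b == 0 then #|F|%:R else 0.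
Proof.
have [->|b_neq0] := eqVneq b 0.
  by under eq_bigr do rewrite mul0r chi0; rewrite sumr_const.
by rewrite -[RHS]sum_chi [RHS](reindex_inj (mulfI b_neq0)).
Qed.

Variable n : nat.
Local Notation vF := {ffun 'I_n -> F}.

Definition dot (x x' : vF) : F := \sum_i x i * x' i.

Lemma sum_chi_dot (a b : vF) :
  \sum_x chi (dot a x - dot b x) = if a == b then (#|F| ^ n)%:R else 0.
Proof.
have chi_dotB x : chi (dot a x - dot b x) = \prod_i chi ((a i - b i) * x i).
  by rewrite -chi_sum /dot -sumrB; congr chi; apply: eq_bigr => i _; ring.
under eq_bigr do rewrite chi_dotB.
rewrite -(bigA_distr_bigA (fun i z => chi ((a i - b i) * z))).
under eq_bigr do rewrite sum_chi_mul subr_eq0.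
have [->|a_neq_b] := eqVneq a b.
  by under eq_bigr do rewrite eqxx; rewrite prodr_const card_ord natrX.
have [i a_i_neq] : exists i, a i != b i.
  apply/existsP; rewrite -negb_forall; apply: contra a_neq_b => /forallP eq_ab.
  by apply/eqP/ffunP => i; apply/eqP.
by rewrite (bigD1 i) //= (negbTE a_i_neq) mul0r.
Qed.

Lemma sum_chi_pairing (e : F) (x x2 : vF) (y y2 : F) : e != 0 ->
  \sum_(x' : vF) \sum_(y' : F)
     chi (e * (dot x x' + y * y')) * chi (- (e * (dot x2 x' + y2 * y')))
  = ((x == x2) && (y == y2))%:R * (#|F| ^ n.+1)%:R.
Proof.
move=> e_neq0.
pose ex := [ffun i => e * x i]; pose ex2 := [ffun i => e * x2 i].
have dot_scale (z x' : vF) : dot [ffun i => e * z i] x' = e * dot z x'.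
  by rewrite /dot mulr_sumr; apply: eq_bigr => i _; rewrite ffunE mulrA.
have split_chi x' y' :
    chi (e * (dot x x' + y * y')) * chi (- (e * (dot x2 x' + y2 * y')))
    = chi (dot ex x' - dot ex2 x') * chi ((e * y - e * y2) * y').
  by rewrite -!chiD !dot_scale; congr chi; ring.
under eq_bigr do under eq_bigr do rewrite split_chi.
under eq_bigr do rewrite -mulr_sumr sum_chi_mul.
rewrite -mulr_suml sum_chi_dot.
have -> : (ex == ex2) = (x == x2).
  apply/eqP/eqP => [/ffunP eq_ex|eq_x]; last by rewrite /ex /ex2 eq_x.
  by apply/ffunP => i; move: (eq_ex i); rewrite !ffunE => /(mulfI e_neq0).
rewrite -mulrBr mulf_eq0 (negbTE e_neq0) subr_eq0 /=.
case: (x == x2); case: (y == y2); rewrite /= ?mul0r ?mulr0 ?mul1r //.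
by rewrite expnS natrM mulrC.
Qed.

Definition fourier_scale : algC := (sqrtC ((#|F| ^ n.+1)%:R))^-1.

Lemma conj_fourier_scale : fourier_scale^* = fourier_scale.
Proof.
by rewrite /fourier_scale fmorphV; congr _^-1; apply: geC0_conj; rewrite sqrtC_ge0 ler0n.
Qed.

Lemma fourier_scale_sqr : fourier_scale * fourier_scale * (#|F| ^ n.+1)%:R = 1.
Proof.
have q_neq0 : (#|F| ^ n.+1)%:R != 0 :> algC.
  rewrite pnatr_eq0 -lt0n expn_gt0; apply/orP; left.
  by apply/card_gt0P; exists 0.
by rewrite /fourier_scale -invfM -expr2 sqrtCK mulVf.
Qed.

End AdditiveCharacter.

(** * Fourier, phase and query gates *)

Section Gates.
Variables (F : finFieldType) (n : nat) (W : finType).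
Local Notation idx := (qidx F n W).
Local Notation mat := (qop F n W).
Local Notation vF := {ffun 'I_n -> F}.
Local Notation chi := (@chi F).
Local Notation dot := (@dot F n).
Local Notation scale := (fourier_scale F n).

Lemma sum_qidx (G : idx -> algC) :
  \sum_t G t = \sum_(x : vF) \sum_(y : F) \sum_(w : W) G (x, y, w).
Proof.
rewrite pair_bigA pair_bigA /=.
by apply: eq_bigr => [[[x y] w]].
Qed.

(* For e = 1 and e = -1: the Fourier transform of F^n x F and its inverse. *)
Definition fourier (e : F) : mat :=
  kmx (fun s t => (s.2 == t.2)%:R * chi (e * (dot s.1.1 t.1.1 + s.1.2 * t.1.2)) * scale).

Lemma fourier_unitary e : e != 0 -> unitary (fourier e).
Proof.
move=> e_neq0; apply: kmx_unitary => [[[x y] w]] [[x2 y2] w2] /=.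
rewrite sum_qidx.
transitivity (\sum_(x' : vF) \sum_(y' : F) ((w == w2)%:R * (scale * scale) *
   (chi (e * (dot x x' + y * y')) * chi (- (e * (dot x2 x' + y2 * y')))))).
  apply: eq_bigr => x' _; apply: eq_bigr => y' _.
  rewrite (bigD1 w) //= big1 ?addr0 => [|w' /negPf]; last first.
    by rewrite eq_sym => ->; rewrite !mul0r.
  rewrite !rmorphM /= conj_chi conj_fourier_scale eqxx [w2 == w]eq_sym.
  by case: (w == w2); rewrite ?conjC1 ?conjC0 /=; ring.
under eq_bigr do rewrite -mulr_sumr; rewrite -mulr_sumr sum_chi_pairing //.
rewrite !xpair_eqE.
case: (w == w2); case: (x == x2); case: (y == y2); rewrite ?mul0r ?mul1r ?mulr0 //=.
by rewrite fourier_scale_sqr.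
Qed.

(* om q^(-(n+1)/2) sum_(x, y) chi (y + h x) |x, y, m>, with q = |F|: the oracle values
   accumulate in the phase function h. *)
Definition phase_state (m : W) (om : algC) (h : vF -> F) (t : idx) : algC :=
  om * (t.2 == m)%:R * chi (t.1.2 + h t.1.1) * scale.

Lemma eq_phase_state m om (h1 h2 : vF -> F) : h1 =1 h2 ->
  kvec (phase_state m om h1) = kvec (phase_state m om h2).
Proof. by move=> eq_h; apply: eq_kvec => t; rewrite /phase_state eq_h. Qed.

Lemma dot0 x : dot x 0 = 0.
Proof. by rewrite /dot big1 // => i _; rewrite ffunE mulr0. Qed.

Lemma fourier_delta m om :
  fourier 1 *m kvec (delta_state (0, 1, m) om) = kvec (phase_state m om (fun _ => 0)).
Proof.
rewrite kmx_mul_kvec; apply: eq_kvec => s; rewrite sum_mul_delta_state.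
by rewrite /phase_state /= dot0 add0r addr0 mulr1 mul1r; ring.
Qed.

(* Bernstein-Vazirani over F. *)
Lemma fourier_affine_phase m om h c a : (forall x, h x = c + dot a x) ->
  fourier (-1) *m kvec (phase_state m om h) = kvec (delta_state (a, 1, m) (om * chi c)).
Proof.
move=> hE; rewrite kmx_mul_kvec; apply: eq_kvec => [[[x y] w]] /=.
rewrite sum_qidx.
transitivity (\sum_(x' : vF) \sum_(y' : F) ((w == m)%:R * (scale * scale) * om * chi c *
   (chi (-1 * (dot x x' + y * y')) * chi (- (-1 * (dot a x' + 1 * y')))))).
  apply: eq_bigr => x' _; apply: eq_bigr => y' _.
  rewrite (bigD1 m) //= big1 ?addr0 => [|w' /negPf w'_neq]; last first.
    by rewrite /phase_state /= w'_neq mulr0 !mul0r mulr0.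
  rewrite /phase_state /= eqxx hE mul1r.
  have -> : chi (y' + (c + dot a x')) = chi c * chi (- (-1 * (dot a x' + y'))).
    by rewrite -chiD; congr chi; ring.
  by case: (w == m); rewrite /=; ring.
under eq_bigr do rewrite -mulr_sumr.
rewrite -mulr_sumr sum_chi_pairing ?oppr_eq0 ?oner_eq0 // /delta_state !xpair_eqE.
case: (w == m); case: (x == a); case: (y == 1); rewrite ?mul0r ?mul1r ?mulr0 //=.
transitivity (om * chi c * (scale * scale * (#|F| ^ n.+1)%:R)); first ring.
by rewrite fourier_scale_sqr mulr1.
Qed.

Definition phase_gate (c : W -> vF -> F) : mat :=
  kmx (fun s t => (s == t)%:R * chi (c t.2 t.1.1)).

Lemma sum_diagonal (G : idx -> algC) s : \sum_t (s == t)%:R * G t = G s.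
Proof.
rewrite (bigD1 s) //= eqxx mul1r big1 ?addr0 // => t.
by rewrite eq_sym => /negPf ->; rewrite mul0r.
Qed.

Lemma phase_gate_unitary c : unitary (phase_gate c).
Proof.
apply: kmx_unitary => s u; under eq_bigr do rewrite -mulrA.
rewrite sum_diagonal rmorphM /= conj_chi mulrCA chi_mulN mulr1 eq_sym.
by case: (s == u); rewrite ?conjC1 ?conjC0.
Qed.

Lemma phase_gate_state c m om h :
  phase_gate c *m kvec (phase_state m om h) =
  kvec (phase_state m om (fun x => h x + c m x)).
Proof.
rewrite kmx_mul_kvec; apply: eq_kvec => s; under eq_bigr do rewrite -mulrA.
rewrite sum_diagonal /phase_state.
case: s => [[x y] w] /=; have [->|_] := eqVneq w m; last by rewrite mulr0 !mul0r mulr0.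
by rewrite addrA [chi (_ + c m _)]chiD; ring.
Qed.

Definition shift (v : vF) (sg : F) (t : idx) : idx := (t.1.1 + v, sg * t.1.2, t.2).

Definition query_map (g : vF -> F) (t : idx) : idx := (t.1.1, t.1.2 + g t.1.1, t.2).

Lemma oracleE g : oracle W g = perm_gate (query_map g).
Proof.
apply/matrixP => i j; rewrite !mxE.
by case: (enum_val j) => [[x y] w] /=; case: eqP.
Qed.

Lemma query_mapK g : cancel (query_map g) (fun t => (t.1.1, t.1.2 - g t.1.1, t.2)).
Proof. by move=> [[x y] w]; rewrite /query_map /= addrK. Qed.

Lemma query_mapVK g : cancel (fun t => (t.1.1, t.1.2 - g t.1.1, t.2)) (query_map g).
Proof. by move=> [[x y] w]; rewrite /query_map /= subrK. Qed.

Section Shift.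
Variables (v : vF) (sg : F).
Hypothesis sg_invol : sg * sg = 1.

Lemma shiftK : cancel (shift v sg) (shift (- v) sg).
Proof. by move=> [[x y] w]; rewrite /shift /= addrK mulrA sg_invol mul1r. Qed.

Lemma shiftNK : cancel (shift (- v) sg) (shift v sg).
Proof. by move=> [[x y] w]; rewrite /shift /= subrK mulrA sg_invol mul1r. Qed.

(* Phase kickback. *)
Lemma query_phase_state g m om h :
  perm_gate (shift (- v) sg) *m
    (oracle W g *m (perm_gate (shift v sg) *m kvec (phase_state m om h)))
  = kvec (phase_state m om (fun x => h x - sg * g (x + v))).
Proof.
rewrite oracleE (perm_gate_kvec shiftK shiftNK).
rewrite (perm_gate_kvec (query_mapK g) (query_mapVK g)).
rewrite (perm_gate_kvec shiftNK shiftK).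
apply: eq_kvec => [[[x y] w]]; rewrite /phase_state /shift /= addrK.
by congr (_ * _ * chi _ * _); rewrite mulrBr mulrA sg_invol mul1r; ring.
Qed.

End Shift.
End Gates.

(** * Finite differences of multilinear polynomials *)

Section Supersets.
Variables (I : finType) (V : zmodType) (T : {set I}).

Lemma supset_card_succ (S : {set I}) :
  (T \subset S) && (#|S| == #|T|.+1) = (S \in [set j |: T | j in ~: T]).
Proof.
apply/andP/imsetP => [[sub_TS /eqP card_S]|[j]]; last first.
  by rewrite inE => j_notin_T ->; rewrite subsetUr cardsU1 j_notin_T.
have /cards1P [j S_minus_T] : #|S :\: T| == 1%N.
  by rewrite cardsD (setIidPr sub_TS) card_S subSnn.
have : j \in S :\: T by rewrite S_minus_T set11.
rewrite inE => /andP [j_notin_T _]; exists j; first by rewrite inE.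
by rewrite -(setID S T) (setIidPr sub_TS) S_minus_T setUC.
Qed.

Lemma sum_supsets_small (G : {set I} -> V) :
  \sum_(S : {set I} | (T \subset S) && (#|S| <= #|T|.+1)%N) G S
  = G T + \sum_(j in ~: T) G (j |: T).
Proof.
rewrite (bigD1 T) ?subxx ?leqnSn //=; congr (_ + _).
transitivity (\sum_(S in [set j |: T | j in ~: T]) G S).
  apply: eq_bigl => S; rewrite -supset_card_succ.
  case sub_TS: (T \subset S) => //=.
  by rewrite eq_sym eqEcard sub_TS /= -ltnNge eqn_leq.
rewrite big_imset // => j k; rewrite !inE => j_notin_T _ eq_jk.
by move: (setU11 j T); rewrite eq_jk => /setU1P [//|]; rewrite (negPf j_notin_T).
Qed.

Lemma sum_supsets (G : {set I} -> V) :
  \sum_(S : {set I} | T \subset S) G S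
  = G T + \sum_(j in ~: T) G (j |: T)
    + \sum_(S : {set I} | (T \subset S) && (#|T|.+2 <= #|S|)%N) G S.
Proof.
rewrite (bigID (fun S : {set I} => (#|S| <= #|T|.+1)%N)) /= sum_supsets_small.
by congr (_ + _); apply: eq_bigl => S; rewrite ltnNge.
Qed.

End Supersets.

Section FiniteDifferences.
Variables (R : comRingType) (I : finType).

Definition diff_sign (T u : {set I}) : R := (-1) ^+ #|T :\: u|.

Lemma finite_difference_monomial (S T : {set I}) (x : I -> R) :
  \sum_(u in powerset T) diff_sign T u * \prod_(i in S) (x i + (i \in u)%:R)
  = if T \subset S then \prod_(i in S :\: T) x i else 0.
Proof.
pose a i : R := if i \in T then (if i \in S then x i + 1 else 1) else 0.
pose b i : R := if i \in T then - (if i \in S then x i else 1)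
                else (if i \in S then x i else 1).
have -> : (if T \subset S then \prod_(i in S :\: T) x i else 0) = \prod_i (a i + b i).
  case: (boolP (T \subset S)) => [/subsetP sub_TS|/subsetPn [i i_T i_notin_S]].
    rewrite big_mkcond; apply: eq_bigr => i _; rewrite /a /b inE.
    case i_T: (i \in T); first by rewrite (sub_TS _ i_T) /= addrAC subrr add0r.
    by case: (i \in S); rewrite /= add0r.
  by rewrite (bigD1 i) //= /a /b i_T (negbTE i_notin_S) addrN mul0r.
rewrite bigA_distr /= [RHS](bigID (fun J => J \in powerset T)) /=.
rewrite [X in _ = _ + X]big1 ?addr0 => [|J]; last first.
  rewrite powersetE => /subsetPn [i i_J i_notin_T].
  by rewrite (bigD1 i) //= i_J /a (negbTE i_notin_T) mul0r.
apply: eq_bigr => J; rewrite powersetE => /subsetP sub_JT.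
rewrite /diff_sign -prodr_const (big_mkcond (fun i => i \in T :\: J)).
rewrite (big_mkcond (fun i => i \in S)) -big_split /=.
apply: eq_bigr => i _; rewrite /a /b inE.
case i_J: (i \in J); first by rewrite (sub_JT _ i_J) /=; case: (i \in S); rewrite ?mul1r.
by case: (i \in T); case: (i \in S); rewrite /= ?mul1r ?addr0 // mulN1r.
Qed.

End FiniteDifferences.

Section AffineRecovery.
Variables (F : finFieldType) (n d : nat).
Local Notation vF := {ffun 'I_n -> F}.
Local Notation sT := {set 'I_n}.

Definition indicator (u : sT) : vF := [ffun i => (i \in u)%:R].

Lemma finite_difference_mleval (alpha : coeffs F n) (T : sT) (x : vF) :
  \sum_(u in powerset T) diff_sign F T u * mleval alpha (x + indicator u)
  = \sum_(S : sT | T \subset S) alpha S * \prod_(i in S :\: T) x i.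
Proof.
under eq_bigr do rewrite /mleval mulr_sumr.
rewrite exchange_big [RHS]big_mkcond /=; apply: eq_bigr => S _.
rewrite -[0 in RHS](mulr0 (alpha S)) -fun_if -finite_difference_monomial mulr_sumr.
apply: eq_bigr => u _.
by rewrite mulrCA; congr (_ * (_ * _)); apply: eq_bigr => i _; rewrite !ffunE.
Qed.

Definition next_coeffs (alpha : coeffs F n) (T : sT) : vF :=
  [ffun j => if j \in T then 0 else alpha (j |: T)].

Definition high_supset (T S : sT) : bool :=
  (T \subset S) && (#|T|.+2 <= #|S|)%N && (#|S| <= d)%N.

Lemma sum_next_coeffs (alpha : coeffs F n) (T : sT) (x : vF) :
  \sum_(j in ~: T) alpha (j |: T) * \prod_(i in (j |: T) :\: T) x i
  = dot (next_coeffs alpha T) x.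
Proof.
rewrite /dot /next_coeffs [RHS](bigID (mem T)) /= [X in _ = X + _]big1 => [|j j_T].
  rewrite add0r; apply: eq_big => [j|j]; first by rewrite inE.
  rewrite inE => j_notin_T; rewrite ffunE (negbTE j_notin_T).
  have extension : (j |: T) :\: T =i pred1 j.
    move=> i; rewrite !inE; have [->|_] := eqVneq i j; first by rewrite j_notin_T.
    by rewrite /= andNb.
  by rewrite (big_pred1 j extension).
by rewrite ffunE j_T mul0r.
Qed.

Lemma finite_difference_affine (alpha : coeffs F n) (e : sT -> F) (T : sT) (x : vF) :
  deg_le d alpha -> (forall S, high_supset T S -> e S = alpha S) ->
  \sum_(S : sT | T \subset S) alpha S * \prod_(i in S :\: T) x i
    - \sum_(S : sT | high_supset T S) e S * \prod_(i in S :\: T) x i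
  = alpha T + dot (next_coeffs alpha T) x.
Proof.
move=> alpha_deg e_high.
rewrite sum_supsets setDv big_set0 mulr1 sum_next_coeffs.
rewrite [X in _ + X - _](bigID (fun S : sT => (#|S| <= d)%N)) /=.
rewrite [X in _ + (_ + X) - _]big1 => [|S]; last first.
  by rewrite -ltnNge => /andP [_ /alpha_deg ->]; rewrite mul0r.
rewrite addr0 [X in _ - X](eq_bigr (fun S => alpha S * \prod_(i in S :\: T) x i)).
  by rewrite addrK.
by move=> S /e_high ->.
Qed.

End AffineRecovery.

(** * The learning algorithm *)

Section Round.
Variables (F : finFieldType) (n d : nat).
Local Notation vF := {ffun 'I_n -> F}.
Local Notation sT := {set 'I_n}.

(* Slot T of the workspace receives the vector next_coeffs alpha T. *)
Definition memory := {ffun sT -> vF}.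
Local Notation idx := (qidx F n memory).
Local Notation instr := (instr F n memory).

Definition set_slot (m : memory) (T : sT) (a : vF) : memory :=
  [ffun T' => if T' == T then a else m T'].

(* alpha_S is read off as the j-th entry of slot S \ j, for any j in S. *)
Definition stored_coeff (m : memory) (S : sT) : F :=
  if [pick j in S] is Some j then m (S :\ j) j else 0.

Definition correction (T : sT) (m : memory) (x : vF) : F :=
  - \sum_(S : sT | high_supset d T S) stored_coeff m S * \prod_(i in S :\: T) x i.

Definition swap_slot (T : sT) (t : idx) : idx :=
  (t.2 T, t.1.2, set_slot t.2 T t.1.1).

Lemma swap_slotK T : involutive (swap_slot T).
Proof.
move=> [[x y] m]; rewrite /swap_slot /set_slot /= ffunE eqxx; congr (_, _, _).
by apply/ffunP => T'; rewrite !ffunE; case: eqP => [->|].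
Qed.

Definition shifted_query (T u : sT) : seq instr :=
  let sg := - diff_sign F T u in
  [:: Gate (perm_gate (shift (indicator F u) sg)); Query F n memory;
      Gate (perm_gate (shift (- indicator F u) sg))].

Definition round (T : sT) : seq instr :=
  Gate (fourier n memory 1) :: flatten [seq shifted_query T u | u <- enum (powerset T)]
  ++ [:: Gate (phase_gate (correction T)); Gate (fourier n memory (-1));
         Gate (perm_gate (swap_slot T))].

Lemma diff_sign_invol (T u : sT) : (- diff_sign F T u) * (- diff_sign F T u) = 1.
Proof. by rewrite mulrNN /diff_sign -exprMn mulrNN mulr1 expr1n. Qed.

Lemma round_unitary T : gates_unitary (round T).
Proof.
split; first by apply: fourier_unitary; rewrite oner_eq0.
apply: gates_unitary_cat.
  apply: gates_unitary_flatten => u; have sg_invol := diff_sign_invol T u.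
  split; first exact: perm_gate_unitary (shiftK _ sg_invol) (shiftNK _ sg_invol).
  by do !split; apply: perm_gate_unitary (shiftNK _ sg_invol) (shiftK _ sg_invol).
split; first exact: phase_gate_unitary.
split; first by apply: fourier_unitary; rewrite oppr_eq0 oner_eq0.
by split => //; apply: perm_gate_unitary (swap_slotK T) (swap_slotK T).
Qed.

Lemma nqueries_round T : nqueries (round T) = (2 ^ #|T|)%N.
Proof.
rewrite /nqueries /round /= count_cat /= add0n addn0 -card_powerset cardE.
by elim: (enum (powerset T)) => //= u us <-; rewrite !add0n !addn0.
Qed.

Lemma shifted_queries_exec g T (us : seq sT) m om h :
  exec (oracle memory g) (flatten [seq shifted_query T u | u <- us])
    (kvec (phase_state m om h))
  = kvec (phase_state m om
      (fun x => h x + \sum_(u <- us) diff_sign F T u * g (x + indicator F u))).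
Proof.
elim: us h => [|u us IHus] h /=.
  by apply: eq_phase_state => x; rewrite big_nil addr0.
rewrite query_phase_state ?diff_sign_invol // IHus.
by apply: eq_phase_state => x; rewrite big_cons mulNr opprK addrA.
Qed.

Lemma round_exec (alpha : coeffs F n) (m : memory) om T :
  deg_le d alpha -> m T = 0 ->
  (forall S, high_supset d T S -> stored_coeff m S = alpha S) ->
  exec (oracle memory (mleval alpha)) (round T) (kvec (delta_state (0, 1, m) om))
  = kvec (delta_state (0, 1, set_slot m T (next_coeffs alpha T)) (om * chi (alpha T))).
Proof.
move=> alpha_deg m_T stored_high.
rewrite /round -cat1s !exec_cat {1}/exec /= fourier_delta shifted_queries_exec.
rewrite /exec /= phase_gate_state.
rewrite (@fourier_affine_phase _ _ _ _ _ _ (alpha T) (next_coeffs alpha T)).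
  by rewrite (perm_gate_delta (swap_slotK T) (swap_slotK T)) /swap_slot /= m_T.
move=> x; rewrite add0r big_enum /= finite_difference_mleval /correction.
by rewrite (finite_difference_affine x alpha_deg stored_high).
Qed.

End Round.

Section Learner.
Variables (F : finFieldType) (n d : nat).
Local Notation sT := {set 'I_n}.
Local Notation memory := (memory F n).
Local Notation idx := (qidx F n memory).

Definition card_ge (A B : sT) : bool := (#|B| <= #|A|)%N.

(* Larger sets come first: round T needs the coefficients of the supersets of T. *)
Definition schedule : seq sT :=
  filter (fun T : sT => (#|T| < d)%N) (sort card_ge (enum {: sT})).

Lemma card_ge_trans : transitive card_ge.
Proof. by move=> B A C le_BA le_CB; apply: leq_trans le_CB le_BA. Qed.

Lemma schedule_sorted : sorted card_ge schedule.
Proof.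
apply: sorted_filter; first exact: card_ge_trans.
by apply: sort_sorted => A B; apply: leq_total.
Qed.

Lemma schedule_uniq : uniq schedule.
Proof. by rewrite filter_uniq // sort_uniq enum_uniq. Qed.

Lemma mem_schedule T : (T \in schedule) = (#|T| < d)%N.
Proof. by rewrite mem_filter mem_sort mem_enum andbT. Qed.

Lemma schedule_suffix pre T post : pre ++ T :: post = schedule ->
  forall X, X \in post -> (#|X| <= #|T|)%N.
Proof.
move=> schedule_split; have : sorted card_ge (T :: post).
  apply: (subseq_sorted card_ge_trans _ schedule_sorted); rewrite -schedule_split.
  by apply: suffix_subseq; apply/suffixP; exists pre.
by move/(order_path_min card_ge_trans)/allP.
Qed.

Lemma schedule_prefix_high pre T post S j : pre ++ T :: post = schedule ->
  high_supset d T S -> j \in S -> S :\ j \in pre.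
Proof.
move=> schedule_split /andP [/andP [_ card_S] card_S_d] j_S.
have card_Sj : #|S| = (#|S :\ j|).+1 by rewrite (cardsD1 j S) j_S.
have : S :\ j \in schedule by rewrite mem_schedule -ltnS -card_Sj.
rewrite -schedule_split mem_cat in_cons => /or3P [//|/eqP Sj_eq_T|].
  by move: card_S; rewrite -Sj_eq_T card_Sj ltnn.
by move/(schedule_suffix schedule_split); rewrite leqNgt -ltnS -card_Sj card_S.
Qed.

Definition learner : seq (instr F n memory) :=
  flatten [seq round F d T | T <- schedule] ++ [:: Query F n memory].

Lemma learner_unitary : gates_unitary learner.
Proof.
apply: gates_unitary_cat; last by [].
by apply: gates_unitary_flatten; apply: round_unitary.
Qed.

Lemma nqueries_learner :
  nqueries learner = (\sum_(T : sT | (#|T| < d)%N) 2 ^ #|T|).+1%N.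
Proof.
rewrite /nqueries count_cat /= addn1; congr _.+1.
transitivity (\sum_(T <- schedule) 2 ^ #|T|)%N; last first.
  rewrite big_filter (perm_big (enum {: sT})) ?perm_sort //.
  by rewrite big_enum_cond; apply: eq_bigl.
elim: schedule => [|T l IHl]; first by rewrite big_nil.
by rewrite big_cons -IHl -(nqueries_round F d T) -count_cat.
Qed.

Definition learner_start : idx := (0, 1, 0).

Definition learner_output (t : idx) : coeffs F n :=
  [ffun S => if S == set0 then t.1.2 - 1
             else if (#|S| <= d)%N then stored_coeff t.2 S else 0].

Definition memory_of (alpha : coeffs F n) (done : seq sT) : memory :=
  [ffun T => if T \in done then next_coeffs alpha T else 0].

Lemma stored_coeff_memory_of alpha done (S : sT) :
  S != set0 -> (forall j, j \in S -> S :\ j \in done) ->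
  stored_coeff (memory_of alpha done) S = alpha S.
Proof.
move=> S_neq0 done_S; rewrite /stored_coeff; case: pickP => [j j_S|S_empty].
  by rewrite ffunE done_S // ffunE setD11 setD1K.
by case/set0Pn: S_neq0 => j j_S; move: (S_empty j); rewrite /= j_S.
Qed.

Section Correctness.
Variable alpha : coeffs F n.
Hypothesis alpha_deg : deg_le d alpha.
Local Notation O := (oracle memory (mleval alpha)).

Lemma rounds_exec post : forall pre om, pre ++ post = schedule ->
  exists2 c, `|c| = 1 &
  exec O (flatten [seq round F d T | T <- post])
    (kvec (delta_state (0, 1, memory_of alpha pre) om))
  = kvec (delta_state (0, 1, memory_of alpha schedule) (om * c)).
Proof.
elim: post => [|T post IHpost] pre om schedule_split.
  by exists 1; rewrite ?normr1 // mulr1 -schedule_split cats0.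
have T_notin_pre : T \notin pre.
  have : uniq (pre ++ T :: post) by rewrite schedule_split schedule_uniq.
  by rewrite cat_uniq /= negb_or => /and3P [_ /andP []].
have stored_high S : high_supset d T S -> stored_coeff (memory_of alpha pre) S = alpha S.
  move=> high_S; apply: stored_coeff_memory_of => [|j]; last first.
    exact: schedule_prefix_high schedule_split high_S.
  by case/andP: high_S => /andP [_ card_S] _; rewrite -card_gt0; apply: leq_trans card_S.
rewrite (_ : flatten [seq round F d T' | T' <- T :: post]
             = round F d T ++ flatten [seq round F d T' | T' <- post]) //.
rewrite exec_cat round_exec //; last by rewrite ffunE (negbTE T_notin_pre).
have -> : set_slot (memory_of alpha pre) T (next_coeffs alpha T)
          = memory_of alpha (rcons pre T).
  by apply/ffunP => T'; rewrite !ffunE mem_rcons in_cons; case: eqP => [->|].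
have [c norm_c ->] :=
  IHpost (rcons pre T) (om * chi (alpha T)) (etrans (cat_rcons _ _ _) schedule_split).
by exists (chi (alpha T) * c); rewrite ?normrM ?norm_chi ?norm_c ?mulr1 ?mulrA.
Qed.

Lemma mleval0 : mleval alpha 0 = alpha set0.
Proof.
rewrite /mleval (bigD1 set0) //= big_set0 mulr1 big1 ?addr0 // => S /set0Pn [i i_S].
by rewrite (bigD1 i) //= ffunE mul0r mulr0.
Qed.

Lemma learner_exec : exists2 c, `|c| = 1 &
  exec O learner (kvec (delta_state learner_start 1))
  = kvec (delta_state (0, 1 + alpha set0, memory_of alpha schedule) c).
Proof.
have memory0 : 0 = memory_of alpha [::] by apply/ffunP => T; rewrite !ffunE.
have [c norm_c rounds] := @rounds_exec schedule [::] 1 (cat0s schedule).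
exists c => //; rewrite exec_cat /learner_start memory0 rounds mul1r /exec /=.
by rewrite oracleE (perm_gate_delta (query_mapK _) (query_mapVK _)) /query_map /= mleval0.
Qed.

Lemma learner_output_memory : learner_output (0, 1 + alpha set0, memory_of alpha schedule) = alpha.
Proof.
apply/ffunP => S; rewrite ffunE /=.
have [->|S_neq0] := eqVneq S set0; first by rewrite addrAC subrr add0r.
case: leqP => [card_S|/alpha_deg -> //].
apply: stored_coeff_memory_of => // j j_S; rewrite mem_schedule.
by move: card_S; rewrite (cardsD1 j S) j_S.
Qed.

End Correctness.

Lemma succ_prob_delta (out : idx -> coeffs F n) (s : idx) c alpha :
  out s = alpha -> `|c| = 1 -> succ_prob out (kvec (delta_state s c)) alpha = 1.
Proof.
move=> out_s norm_c; rewrite /succ_prob big_mkcond /=.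
under eq_bigr do rewrite mxE.
rewrite (sum_enum_val (fun t => if out t == alpha then `|delta_state s c t| ^+ 2 else 0)).
rewrite (bigD1 s) //= out_s eqxx big1 ?addr0 => [|t /negPf t_neq_s].
  by rewrite /delta_state eqxx mulr1 norm_c expr1n.
by rewrite /delta_state t_neq_s mulr0 normr0 expr0n if_same.
Qed.

Lemma learner_exact :
  exact_learner d (nqueries learner) learner_start (circuit_unitaries learner) learner_output.
Proof.
split => [k _|alpha alpha_deg]; first exact: circuit_unitaries_unitary learner_unitary k.
rewrite run_circuit basis_vecE.
have [c norm_c ->] := learner_exec alpha_deg.
exact: succ_prob_delta (learner_output_memory alpha_deg) norm_c.
Qed.

End Learner.

(** * Query count *)

Local Close Scope ring_scope.

Lemma query_boundE m d : query_bound m d = (1 + \sum_(i < d) 2 ^ i * 'C(m, i))%N.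
Proof.
rewrite /query_bound big_add1 /= big_mkord; congr (_ + _)%N.
by apply: eq_bigr => i _; rewrite subn1.
Qed.

Lemma sum_exp2_card_small (I : finType) k :
  (\sum_(A : {set I} | #|A| < k) 2 ^ #|A| = \sum_(i < k) 2 ^ i * 'C(#|I|, i))%N.
Proof.
elim: k => [|k IHk]; first by rewrite big_ord0 big_pred0.
rewrite big_ord_recr /= -IHk (bigID (fun A : {set I} => #|A| < k)) /=.
congr (_ + _)%N.
  by apply: eq_bigl => A; rewrite ltnS andb_idl // => /ltnW.
rewrite -card_draws mulnC -sum_nat_const; apply: eq_big => A.
  by rewrite inE ltnS -leqNgt andbC -eqn_leq.
by rewrite ltnS -leqNgt andbC -eqn_leq => /eqP ->.
Qed.

Lemma bin_leq_exp m i : ('C(m, i) <= m ^ i)%N.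
Proof.
apply: (@leq_trans ('C(m, i) * i`!)); first by rewrite leq_pmulr ?fact_gt0.
rewrite bin_ffact ffact_prod (@leq_trans (\prod_(j < i) m)) //.
  by apply: leq_prod => j _; rewrite leq_subr.
by rewrite prod_nat_const card_ord.
Qed.

Lemma query_bound_poly d : (1 <= d)%N ->
  exists C : nat, forall m : nat, (1 <= m)%N -> (query_bound m d <= C * m ^ d.-1)%N.
Proof.
move=> d_gt0; exists (d * 2 ^ d).+1 => m m_gt0.
rewrite query_boundE mulSn leq_add ?expn_gt0 ?m_gt0 //.
apply: (@leq_trans (\sum_(i < d) 2 ^ d * m ^ d.-1)); last first.
  by rewrite sum_nat_const card_ord mulnA.
apply: leq_sum => i _; apply: leq_mul; first by rewrite leq_exp2l // ltnW.
by apply: leq_trans (bin_leq_exp m i) _; rewrite leq_pexp2l // -ltnS prednK.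
Qed.

Theorem theorem2 (F : finFieldType) (n d : nat) :
  (exists (W : finType) (T : nat) (s0 : qidx F n W)
          (U : nat -> qop F n W) (out : qidx F n W -> coeffs F n),
      (T <= query_bound n d)%N /\ exact_learner d T s0 U out)
  /\ ((1 <= d)%N ->
      exists C : nat, forall m : nat, (1 <= m)%N ->
        (query_bound m d <= C * m ^ d.-1)%N).
Proof.
split; last exact: query_bound_poly.
exists (memory F n), (nqueries (learner F n d)), (learner_start F n).
exists (circuit_unitaries (learner F n d)), (@learner_output F n d).
split; last exact: learner_exact.
by rewrite nqueries_learner sum_exp2_card_small card_ord query_boundE add1n.
Qed.
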